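(* Let $G=G_1\otimes G_2$, where $G_1$ and $G_2$ are arbitrary vertex-disjoint graphs, and let $I_s,I_t$ be independent sets of $G$. Then the length of a shortest reconfiguration sequence from $I_s$ to $I_t$ is at most $2$.
   Context: All graphs are finite, simple, undirected, with nonempty vertex sets. The join of vertex-disjoint graphs $G_1=(V_1,E_1)$, $G_2=(V_2,E_2)$ is $G_1\otimes G_2=(V_1\cup V_2,\,E_1\cup E_2\cup\{v_1v_2: v_1\in V_1,v_2\in V_2\})$. A reconfiguration sequence from $I_s$ to $I_t$ of length $\ell$ is a sequence $\langle I_s=I_0,\dots,I_\ell=I_t\rangle$ of independent sets of $G$ such that the induced subgraph $G[I_{i-1}\triangle I_i]$ is connected for every $i\in\{1,\dots,\ell\}$. *)

From mathcomp Require Import all_boot.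
Set Implicit Arguments. Unset Strict Implicit. Unset Printing Implicit Defensive.

Definition simple_graph (T : finType) (e : rel T) : Prop :=
  symmetric e /\ irreflexive e.

(* Join G1 (x) G2 on the disjoint union T1 + T2: edges of G1, edges of G2,
   and all edges between a vertex of V1 and a vertex of V2. *)
Definition join_rel (T1 T2 : finType) (e1 : rel T1) (e2 : rel T2) : rel (T1 + T2) :=
  fun u v =>
    match u, v with
    | inl x, inl y => e1 x y
    | inr x, inr y => e2 x y
    | _, _ => true
    end.

Definition independent (T : finType) (e : rel T) (S : {set T}) : bool :=
  [forall x in S, forall y in S, ~~ e x y].

Definition induced_rel (T : finType) (e : rel T) (S : {set T}) : rel T :=
  fun x y => [&& x \in S, y \in S & e x y].

(* G[S] is connected (graphs have nonempty vertex sets). *)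
Definition induced_connected (T : finType) (e : rel T) (S : {set T}) : bool :=
  (S != set0) && [forall x in S, forall y in S, connect (induced_rel e S) x y].

Definition symdiff (T : finType) (A B : {set T}) : {set T} :=
  (A :\: B) :|: (B :\: A).

Definition reconf_step (T : finType) (e : rel T) : rel {set T} :=
  fun A B => induced_connected e (symdiff A B).

(* Is :: rest is a reconfiguration sequence from Is to It, of length size rest. *)
Definition reconf_seq (T : finType) (e : rel T) (Is It : {set T})
    (rest : seq {set T}) : bool :=
  [&& all (independent e) (Is :: rest), path (reconf_step e) Is rest
    & last Is rest == It].

From mathcomp Require Import all_boot.
Set Implicit Arguments. Unset Strict Implicit.

(* In the join every vertex of G1 is adjacent to every vertex of G2, so an
   independent set lies inside one side.  If Is and It together meet both
   sides, they lie on opposite sides, Is (+) It = Is u It meets both sides and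
   is connected: one step suffices.  Otherwise Is u It lies in one side, and a
   vertex v of the other side is adjacent to all of it; then Is -> {v} -> It is
   a reconfiguration sequence, as both symmetric differences are stars
   centred at v. *)

Section Reconfiguration.
Variables (T : finType) (e : rel T).

Lemma induced_connected_hub (S : {set T}) (c : T) :
  c \in S ->
  {in S, forall u, connect (induced_rel e S) u c && connect (induced_rel e S) c u} ->
  induced_connected e S.
Proof.
move=> cS hub; apply/andP; split; first by apply/set0Pn; exists c.
apply/forall_inP=> u uS; apply/forall_inP=> w wS.
have /andP[uc _] := hub u uS; have /andP[_ cw] := hub w wS.
exact: connect_trans uc cw.
Qed.

Lemma induced_connected_setU1 (A : {set T}) (v : T) :
  {in A, forall u, e u v && e v u} -> induced_connected e (v |: A).
Proof.
move=> adj; apply: (@induced_connected_hub _ v); first exact: setU11.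
move=> u; case: (eqVneq u v) => [-> _|u_neq_v]; first by rewrite connect0.
rewrite !inE (negPf u_neq_v) /= => uA; have /andP[euv evu] := adj u uA.
by rewrite !connect1 // /induced_rel !inE eqxx uA orbT.
Qed.

Lemma symdiff_set1r (A : {set T}) (v : T) : v \notin A -> symdiff A [set v] = v |: A.
Proof.
move=> vA; apply/setP=> u; rewrite /symdiff !inE.
by case: (eqVneq u v) => [->|_]; rewrite ?vA ?andbF ?orbF.
Qed.

Lemma symdiffC (A B : {set T}) : symdiff A B = symdiff B A.
Proof. exact: setUC. Qed.

Lemma independent_set1 (v : T) : ~~ e v v -> independent e [set v].
Proof. by move=> evv; apply/forall_inP=> x /set1P->; apply/forall_inP=> y /set1P->. Qed.

Lemma reconf_seq_via_universal (Is It : {set T}) (v : T) :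
  independent e Is -> independent e It -> ~~ e v v -> v \notin Is :|: It ->
  {in Is :|: It, forall u, e u v && e v u} ->
  reconf_seq e Is It [:: [set v]; It].
Proof.
move=> iIs iIt evv; rewrite inE negb_or => /andP[vIs vIt] adj.
rewrite /reconf_seq /= iIs iIt independent_set1 //= eqxx !andbT /reconf_step.
rewrite symdiff_set1r // [symdiff _ It]symdiffC symdiff_set1r //.
by apply/andP; split; apply: induced_connected_setU1 => u uI;
  apply: adj; rewrite inE uI ?orbT.
Qed.

End Reconfiguration.

Section Join.
Variables (T1 T2 : finType) (e1 : rel T1) (e2 : rel T2).
Notation E := (join_rel e1 e2).

Lemma independent_join_inl_inr (S : {set T1 + T2}) x y :
  independent E S -> inl x \in S -> inr y \notin S.
Proof.
by move=> /forall_inP iS xS; apply/negP=> yS; move/forall_inP: (iS _ xS) => /(_ _ yS).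
Qed.

Lemma join_induced_connected (S : {set T1 + T2}) x y :
  inl x \in S -> inr y \in S -> induced_connected E S.
Proof.
move=> xS yS; apply: (induced_connected_hub xS) => -[a|b] uS.
- by apply/andP; split; apply: (@connect_trans _ _ (inr y));
    rewrite connect1 // /induced_rel ?uS ?xS yS.
- by rewrite !connect1 // /induced_rel uS xS.
Qed.

Lemma join_reconf_step (Is It : {set T1 + T2}) x y :
  independent E Is -> independent E It ->
  inl x \in Is :|: It -> inr y \in Is :|: It -> reconf_step E Is It.
Proof.
wlog xIs : Is It / inl x \in Is.
  move=> wlog_xIs iIs iIt xI yI; case/setUP: (xI) => xIs; first exact: wlog_xIs.
  by rewrite /reconf_step symdiffC; apply: wlog_xIs; rewrite // setUC.
move=> iIs iIt _; have yIs := independent_join_inl_inr y iIs xIs.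
rewrite inE (negPf yIs) /= => yIt.
have xIt : inl x \notin It by apply: contraL yIt; apply: independent_join_inl_inr.
by apply: (@join_induced_connected _ x y); rewrite /symdiff !inE ?xIs ?xIt ?yIs ?yIt.
Qed.

End Join.

Theorem lemma25 (T1 T2 : finType) (e1 : rel T1) (e2 : rel T2)
  (h1 : simple_graph e1) (h2 : simple_graph e2)
  (n1 : 0 < #|T1|) (n2 : 0 < #|T2|)
  (Is It : {set T1 + T2}) :
  independent (join_rel e1 e2) Is -> independent (join_rel e1 e2) It ->
  exists rest : seq {set T1 + T2},
    size rest <= 2 /\ reconf_seq (join_rel e1 e2) Is It rest.
Proof.
move=> iIs iIt; set U := Is :|: It.
have [[[x xU] [y yU]] | [noL | noR]] :
    ((exists x, inl x \in U) /\ (exists y, inr y \in U))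
    \/ (forall x, inl x \notin U) \/ (forall y, inr y \notin U).
- case: (pickP (fun x => inl x \in U)) => [x xU|noL]; last by right; left=> x; rewrite noL.
  case: (pickP (fun y => inr y \in U)) => [y yU|noR]; last by right; right=> y; rewrite noR.
  by left; split; [exists x | exists y].
- exists [:: It]; split=> //.
  by rewrite /reconf_seq /= iIs iIt eqxx !andbT (join_reconf_step iIs iIt xU yU).
- case/card_gt0P: n1 => x _; exists [:: [set inl x]; It]; split=> //.
  apply: reconf_seq_via_universal; rewrite //= ?h1.2 // => -[a aU|//].
  by have := noL a; rewrite aU.
- case/card_gt0P: n2 => y _; exists [:: [set inr y]; It]; split=> //.
  apply: reconf_seq_via_universal; rewrite //= ?h2.2 // => -[//|b bU].
  by have := noR b; rewrite bU.
Qed.
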